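(* Let $n\geq3$ and $\lambda=(\lambda_1,\dots,\lambda_n)\in\mathbb{R}^n$ with $\lambda_1+\dots+\lambda_n>0$ and $N(\lambda)=n$. Then \[\sum_{P\in\mathcal{P}^0_{ord}(\lambda)}(-1)^{|P|}\varepsilon(P)\varepsilon'(P)=0.\]
   Context: $s_J(\lambda)=\sum_{i\in J}\lambda_i$ for $J\subset\{1,\dots,n\}$. $\delta(\lambda)$ is the minimum of $s_J(\lambda)/|J|$ over subsets $J$ with $s_J(\lambda)>0$; when $\delta(\lambda)>0$, $N(\lambda)$ is the minimum of $|J|$ over subsets $J$ with $s_J(\lambda)/|J|=\delta(\lambda)$. Ordered partitions $P=(I_1,\dots,I_k)$ of $\{1,\dots,n\}$ into nonempty blocks, $|P|=k$. $\mathcal{P}_{ord}(\lambda)$: those with $s_{I_1}(\lambda)+\dots+s_{I_i}(\lambda)>0$ for all $i$. $\mathcal{P}^0_{ord}(\lambda)$: those in $\mathcal{P}_{ord}(\lambda)$ having at most one block of odd cardinality. $\varepsilon(P)=\mathrm{sgn}(\sigma_P)$, where $\sigma_P$ is the unique permutation with $\sigma_P^{-1}$ mapping $\{n_1+\dots+n_i+1,\dots,n_1+\dots+n_{i+1}\}$ increasingly onto $I_{i+1}$ ($n_i=|I_i|$); $\varepsilon'(P)=(-1)^{\frac12\sum_i|I_i|(|I_i|-1)}$. *)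

From HB Require Import structures.
From mathcomp Require Import all_boot all_order all_algebra all_fingroup.
Set Implicit Arguments. Unset Strict Implicit. Unset Printing Implicit Defensive.
Import Order.TTheory GRing.Theory Num.Theory.
Local Open Scope ring_scope.

Section Defs.
Variables (R : realFieldType) (n : nat).
Implicit Types (lam : 'I_n -> R) (J : {set 'I_n}).

Definition sJ lam J : R := \sum_(i in J) lam i.

(* delta(lambda) = min of s_J/|J| over J with s_J > 0 (the full set is
   among them whenever sum lambda > 0, so it serves as initial value). *)
Definition delta lam : R :=
  \big[Num.min/ sJ lam setT / (#|[set: 'I_n]|%:R)]_(J | 0 < sJ lam J)
     (sJ lam J / #|J|%:R).

Definition Nlam lam : nat :=
  \big[minn/n]_(J | (J != set0) && (sJ lam J / #|J|%:R == delta lam)) #|J|.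

Definition is_ord_partition k (P : k.-tuple {set 'I_n}) : bool :=
  [&& [forall i : 'I_k, tnth P i != set0],
      [forall i : 'I_k, forall j : 'I_k,
          (i != j) ==> [disjoint tnth P i & tnth P j]] &
      \bigcup_(i < k) tnth P i == setT].

Definition in_Pord lam k (P : k.-tuple {set 'I_n}) : bool :=
  is_ord_partition P &&
  [forall i : 'I_k, 0 < \sum_(j < k | (j <= i)%N) sJ lam (tnth P j)].

Definition in_P0ord lam k (P : k.-tuple {set 'I_n}) : bool :=
  in_Pord lam P && (count (fun B : {set 'I_n} => odd #|B|) (tval P) <= 1)%N.

(* The word sigma_P^{-1}(1), ..., sigma_P^{-1}(n): the blocks listed in
   order, each block increasingly. *)
Definition block_word k (P : k.-tuple {set 'I_n}) : seq 'I_n :=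
  flatten [seq [seq x <- enum 'I_n | x \in B] | B : {set 'I_n} <- tval P].

Definition sigmaP_inv_fun k (P : k.-tuple {set 'I_n}) (p : 'I_n) : 'I_n :=
  nth p (block_word P) p.

Definition eps k (P : k.-tuple {set 'I_n}) : R :=
  match [pick s : {perm 'I_n} | [forall p, s p == sigmaP_inv_fun P p]] with
  | Some s => (-1) ^+ odd_perm (s^-1)%g
  | None => 1
  end.

Definition eps' k (P : k.-tuple {set 'I_n}) : R :=
  (-1) ^+ (\sum_(B <- tval P) #|B| * (#|B| - 1))./2.

End Defs.

(* Since N(lambda) = n, the minimum delta(lambda) = s/n of the means s_J/|J| is attained
   only by the full set, so every proper J with s_J > 0 has mean > s/n; as the means of J
   and of its complement average to s/n, no J satisfies 0 < s_J < s.  By the cycle lemma,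
   every orbit of ordered partitions under rotation of the blocks therefore contains exactly
   one member with all prefix sums positive, just as it contains exactly one member whose
   first block contains the least element.  When at most one block is odd the summand is
   invariant under rotation, so the sum may be taken over the partitions of the second kind.
   These are paired off by a sign-reversing involution built on the two largest elements
   (n >= 3 keeps them out of the first block): if no block contains both, swap them, which
   only changes eps; otherwise let B be the first block containing both and either merge B
   into the preceding block, if B consists of these two elements, or split them off B as a
   new block right after it.  This changes |P| by one but fixes the word sigma_P^-1, since
   the two elements are the largest letters, and fixes eps', whose exponent moves by 2|A|. *)

From HB Require Import structures.
From mathcomp Require Import all_boot all_order all_algebra all_fingroup.
From mathcomp Require Import zify lra.
Set Implicit Arguments. Unset Strict Implicit. Unset Printing Implicit Defensive.
Import Order.TTheory GRing.Theory Num.Theory.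
Local Open Scope ring_scope.

Section BigFilterBij.
Variables (R : Type) (idx : R) (op : Monoid.com_law idx) (X : eqType).

Lemma big_filter_bij (L : seq X) (A B : pred X) (F G : X -> R) (h h' : X -> X) :
  uniq L -> {subset A <= L} -> {subset B <= L} ->
  (forall x, A x -> [/\ B (h x), h' (h x) = x & G (h x) = F x]) ->
  (forall y, B y -> A (h' y) /\ h (h' y) = y) ->
  \big[op/idx]_(x <- L | A x) F x = \big[op/idx]_(y <- L | B y) G y.
Proof.
move=> uL AL BL hA hB; rewrite -big_filter -[RHS]big_filter.
have -> : \big[op/idx]_(x <- [seq x <- L | A x]) F x =
          \big[op/idx]_(x <- [seq x <- L | A x]) G (h x).
  by apply: eq_big_seq => x; rewrite mem_filter => /andP[/hA[]].
rewrite -(big_map h xpredT); apply/perm_big/uniq_perm.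
- rewrite map_inj_in_uniq ?filter_uniq // => x y.
  rewrite !mem_filter => /andP[/hA[_ hx _] _] /andP[/hA[_ hy _] _] hxy.
  by rewrite -hx hxy hy.
- by rewrite filter_uniq.
move=> y; rewrite mem_filter; apply/mapP/andP => [[x]|[By yL]].
  by rewrite mem_filter => /andP[Ax _] ->; have [Bhx _ _] := hA x Ax; rewrite Bhx BL.
have [Ah'y <-] := hB y By.
by exists (h' y); rewrite // mem_filter Ah'y AL.
Qed.

End BigFilterBij.

Lemma sum_sign_reversing_involution (R : numDomainType) (X : eqType)
    (L : seq X) (A : pred X) (F : X -> R) (i : X -> X) :
  uniq L -> {subset A <= L} ->
  (forall x, A x -> [/\ A (i x), i (i x) = x & F (i x) = - F x]) ->
  \sum_(x <- L | A x) F x = 0.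
Proof.
move=> uL AL hi.
have : \sum_(x <- L | A x) F x = \sum_(x <- L | A x) - F x.
  apply: (@big_filter_bij _ _ _ _ L A A F (fun x => - F x) i i) => // x Ax.
    by have [? ? ->] := hi x Ax; rewrite opprK.
  by have [] := hi x Ax.
rewrite sumrN => /eqP; rewrite -subr_eq0 opprK -mulr2n -mulr_natr.
by rewrite mulf_eq0 pnatr_eq0 orbF => /eqP.
Qed.

Section Words.
Variable n : nat.
Implicit Types (B : {set 'I_n}) (s : seq {set 'I_n}) (w : seq 'I_n).

Definition block B : seq 'I_n := [seq x <- enum 'I_n | x \in B].

Definition block_seq s : seq 'I_n := flatten [seq block B | B <- s].

(* The sign of the permutation q |-> w_q (junk value 1 if w is not a permutation of 'I_n),
   so that eps R P is word_sign R (block_seq P) by definition. *)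
Definition word_sign (R : pzRingType) w : R :=
  match [pick p : {perm 'I_n} | [forall q, p q == nth q w q]] with
  | Some p => (-1) ^+ odd_perm (p^-1)%g
  | None => 1
  end.

Lemma block_uniq B : uniq (block B).
Proof. by rewrite filter_uniq ?enum_uniq. Qed.

Lemma mem_block B x : (x \in block B) = (x \in B).
Proof. by rewrite mem_filter mem_enum andbT. Qed.

Lemma size_block B : size (block B) = #|B|.
Proof. by rewrite -(card_uniqP (block_uniq B)); apply: eq_card => x; rewrite mem_block. Qed.

Lemma block_seq_cons B s : block_seq (B :: s) = block B ++ block_seq s.
Proof. by []. Qed.

Lemma block_seq_cat s1 s2 : block_seq (s1 ++ s2) = block_seq s1 ++ block_seq s2.
Proof. by rewrite /block_seq map_cat flatten_cat. Qed.

Lemma count_block_seq x s :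
  count_mem x (block_seq s) = count (fun B : {set 'I_n} => x \in B) s.
Proof.
elim: s => [|B s IHs] //=.
by rewrite block_seq_cons count_cat IHs count_uniq_mem ?block_uniq // mem_block.
Qed.

Lemma size_block_seq s : size (block_seq s) = (\sum_(B <- s) #|B|)%N.
Proof.
elim: s => [|B s IHs]; first by rewrite big_nil.
by rewrite block_seq_cons size_cat IHs big_cons size_block.
Qed.

Lemma perm_of_word w : perm_eq w (enum 'I_n) ->
  exists p : {perm 'I_n}, forall q, p q = nth q w q.
Proof.
move=> pw; have sw : size w = n by rewrite (perm_size pw) size_enum_ord.
have uw : uniq w by rewrite (perm_uniq pw) enum_uniq.
have inj : injective (fun q : 'I_n => nth q w q).
  move=> q1 q2 /=; have [l1 l2] : (q1 < size w)%N /\ (q2 < size w)%N by rewrite sw.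
  rewrite (set_nth_default q1 q2 l2) => e.
  by apply/val_inj/eqP; rewrite -(nth_uniq q1 l1 l2 uw) e.
by exists (perm inj) => q; rewrite permE.
Qed.

Lemma odd_size_block_seq s :
  odd (size (block_seq s)) = odd (count (fun B : {set 'I_n} => odd #|B|) s).
Proof.
elim: s => [|B s IHs] //=.
by rewrite block_seq_cons size_cat oddD IHs size_block; case: odd.
Qed.

Variable R : pzRingType.

Lemma word_signE w (p : {perm 'I_n}) :
  (forall q, p q = nth q w q) -> word_sign R w = (-1) ^+ p.
Proof.
move=> wp; rewrite /word_sign; case: pickP => [p' /forallP wp'|/(_ p)].
  suff -> : p' = p by rewrite odd_permV.
  by apply/permP => q; rewrite wp; apply/eqP/wp'.
by move/forallP; case => q; rewrite wp.
Qed.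

Lemma word_sign_tperm w a b : perm_eq w (enum 'I_n) -> a != b ->
  word_sign R (map (tperm a b) w) = - word_sign R w.
Proof.
move=> pw ab; have [p wp] := perm_of_word pw.
have sw : size w = n by rewrite (perm_size pw) size_enum_ord.
rewrite (word_signE wp) (@word_signE _ (p * tperm a b)%g).
  by rewrite odd_permM odd_tperm ab signr_addb mulrN1.
by move=> q; rewrite permM wp (nth_map q) ?sw // (set_nth_default q).
Qed.

End Words.

Section CyclicShift.
Variable m : nat.
Local Notation n := m.+1.

Definition ord_cycle : {perm 'I_n} := perm (@ordS_inj n).

Lemma ord_cycleX j (q : 'I_n) : val ((ord_cycle ^+ j)%g q) = ((q + j) %% n)%N.
Proof.
elim: j => [|j IHj]; first by rewrite expg0 perm1 addn0 modn_small.
rewrite expgSr permM permE /= IHj.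
by rewrite -[(_ %% n).+1]addn1 modnDml -addnA addn1.
Qed.

Lemma odd_ord_cycle : odd_perm ord_cycle = ~~ odd n.
Proof.
rewrite /odd_perm card_ord.
suff -> : porbits ord_cycle = [set porbit ord_cycle ord0] by rewrite cards1 addbT.
apply/setP => X; rewrite in_set1; apply/imsetP/eqP => [[x _ ->]|->]; last by exists ord0.
have -> : x = (ord_cycle ^+ x)%g ord0 by apply/val_inj; rewrite ord_cycleX add0n modn_small.
by rewrite porbit_perm.
Qed.

Lemma odd_ord_cycleX j : odd_perm (ord_cycle ^+ j)%g = odd j && ~~ odd n.
Proof.
elim: j => [|j IHj]; first by rewrite expg0 odd_perm1.
by rewrite expgSr odd_permM IHj odd_ord_cycle /=; case: (odd j); case: (odd m).
Qed.

Lemma word_sign_rot (R : pzRingType) (w : seq 'I_n) j :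
  perm_eq w (enum 'I_n) -> (j <= n)%N ->
  word_sign R (rot j w) = (-1) ^+ (odd j && ~~ odd n) * word_sign R w.
Proof.
move=> pw jn; have [p wp] := perm_of_word pw.
have sw : size w = n by rewrite (perm_size pw) size_enum_ord.
rewrite (word_signE R wp) (@word_signE _ R _ (ord_cycle ^+ j * p)%g).
  by rewrite odd_permM odd_ord_cycleX signr_addb.
move=> q; rewrite permM wp (set_nth_default q) ?sw // ord_cycleX.
have qn := ltn_ord q; rewrite /rot nth_cat size_drop sw; case: ltnP => qj.
  by rewrite nth_drop modn_small 1?addnC //; lia.
have -> : (q + j = 1 * n + (q - (n - j)))%N by lia.
by rewrite modnMDl modn_small ?nth_take //; lia.
Qed.

End CyclicShift.

Lemma count_tnth (T : Type) k (t : k.-tuple T) (p : pred T) :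
  count p t = #|[pred i | p (tnth t i)]|.
Proof. by rewrite -sum1_count big_tuple -sum1_card; apply: eq_bigl. Qed.

Section SeqPartitions.
Variable n : nat.
Implicit Types (B : {set 'I_n}) (s t : seq {set 'I_n}).

Definition is_part s :=
  (set0 \notin s) && [forall x, count (fun B : {set 'I_n} => x \in B) s == 1%N].

Definition at_most_one_odd s := (count (fun B : {set 'I_n} => odd #|B|) s <= 1)%N.

Lemma is_ord_partitionE k (P : k.-tuple {set 'I_n}) : is_ord_partition P = is_part P.
Proof.
rewrite /is_ord_partition /is_part.
have -> : [forall i, tnth P i != set0] = (set0 \notin tval P).
  apply/forallP/negP => [nz /tnthP[i ei] | nP i]; first by move: (nz i); rewrite -ei eqxx.
  by apply: contra_not_neq nP => ei; apply/tnthP; exists i.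
case: (set0 \notin tval P) => //=.
apply/andP/forallP => [[/forallP disj /eqP cover] x | one].
  have /bigcupP[i _ xi] : x \in \bigcup_(i < k) tnth P i by rewrite cover inE.
  rewrite count_tnth; apply/card1P; exists i => j; rewrite inE /=.
  apply/idP/eqP => [xj | -> //]; apply/eqP; apply: contraT => ji.
  by rewrite (disjointFr (implyP (forallP (disj j) i) ji) xj) in xi.
have block_of x : exists i, [pred j | x \in tnth P j] =i pred1 i.
  by apply/card1P; rewrite -(count_tnth _ (fun B : {set 'I_n} => x \in B)); apply: one.
split.
  apply/forallP => i; apply/forallP => j; apply/implyP => ij.
  rewrite disjoint_subset; apply/subsetP => x xi; rewrite inE /=; apply/negP => xj.
  have [l el] := block_of x; have := el i; have := el j; rewrite !inE xi xj.
  by move=> /esym/eqP ej /esym/eqP ei; rewrite ei ej eqxx in ij.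
apply/eqP/setP => x; rewrite inE; have [l el] := block_of x.
by apply/bigcupP; exists l; have := el l; rewrite // !inE eqxx.
Qed.

Lemma part_perm_enum s : is_part s -> perm_eq (block_seq s) (enum 'I_n).
Proof.
case/andP => _ /forallP one; apply/allP => x _; rewrite /= count_block_seq.
by rewrite (eqP (one x)) count_uniq_mem ?enum_uniq // mem_enum.
Qed.

Lemma size_block_seq_part s : is_part s -> size (block_seq s) = n.
Proof. by move/part_perm_enum/perm_size; rewrite size_enum_ord. Qed.

Lemma size_part s : is_part s -> (size s <= n)%N.
Proof.
move=> ps; rewrite -[X in (_ <= X)%N](size_block_seq_part ps) size_block_seq.
case/andP: ps => nz _; elim: s nz => [|B s IHs] //=.
rewrite inE negb_or big_cons eq_sym -card_gt0 => /andP[B0 nz].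
by rewrite -add1n leq_add // IHs.
Qed.

Lemma is_part_neq0 s A : is_part s -> A \in s -> A != set0.
Proof. by case/andP => s0 _ As; apply: contraNneq s0 => <-. Qed.

Lemma is_part_disjoint pre A B post : is_part (pre ++ A :: B :: post) -> [disjoint A & B].
Proof.
case/andP => _ /forallP one; rewrite disjoint_subset; apply/subsetP => x xA.
by rewrite inE /=; apply/negP => xB; have := one x; rewrite count_cat /= xA xB; lia.
Qed.

End SeqPartitions.

Section PrefixSums.
Variable R : realDomainType.
Implicit Types b : seq R.

Definition prefix_sum b i := \sum_(x <- take i b) x.

Definition prefix_sums_pos b := all (fun i => 0 < prefix_sum b i.+1) (iota 0 (size b)).

Lemma prefix_sumE b m i : size b = m -> (i <= m)%N ->
  prefix_sum b i = \sum_(j < m | (j < i)%N) b`_j.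
Proof.
move=> <- ib; rewrite /prefix_sum (big_nth 0) size_takel // big_mkord.
rewrite (big_ord_widen_cond (size b) xpredT) //.
by apply: eq_bigr => j /= ji; rewrite nth_take.
Qed.

Lemma prefix_sums_posE (T : Type) (f : T -> R) k (t : k.-tuple T) :
  [forall i : 'I_k, 0 < \sum_(j < k | (j <= i)%N) f (tnth t j)] =
  prefix_sums_pos (map f t).
Proof.
have E (i : 'I_k) :
    \sum_(j < k | (j <= i)%N) f (tnth t j) = prefix_sum (map f t) i.+1.
  rewrite (prefix_sumE (m := k)) ?size_map ?size_tuple //.
  by apply: eq_bigr => j _; rewrite -tnth_map (tnth_nth 0).
rewrite /prefix_sums_pos size_map size_tuple.
apply/forallP/allP => [pos i | pos i].
  by rewrite mem_iota => /= ik; have := pos (Ordinal ik); rewrite E.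
by rewrite E; apply: pos; rewrite mem_iota add0n ltn_ord.
Qed.

Lemma prefix_sum_rot b r j : (r <= size b)%N -> (j <= size b)%N ->
  prefix_sum (rot r b) j =
  if (j <= size b - r)%N then prefix_sum b (r + j) - prefix_sum b r
  else \sum_(x <- b) x - prefix_sum b r + prefix_sum b (j - (size b - r)).
Proof.
move=> rb jb; rewrite /prefix_sum /rot take_cat size_drop.
have sum_drop : \sum_(x <- drop r b) x = \sum_(x <- b) x - \sum_(x <- take r b) x.
  by rewrite -{2}(cat_take_drop r b) big_cat /= addrC addrK.
case: ltnP => jr; first by rewrite (ltnW jr) takeD big_cat /= addrC addrK.
case: leqP => jr'.
  have -> : j = (size b - r)%N by apply/eqP; rewrite eqn_leq jr jr'.
  by rewrite subnn take0 cats0 sum_drop subnKC // take_size.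
by rewrite big_cat /= sum_drop take_takel //; lia.
Qed.

Lemma exists_last_argmin (f : nat -> R) k : (0 < k)%N ->
  exists2 r, (r < k)%N &
    forall i, (i < k)%N -> f r <= f i /\ ((r < i)%N -> f r < f i).
Proof.
case: k => // k _; pose g (i : 'I_k.+1) := f i.
have [i0 _ min_i0] := @arg_minP _ _ _ ord0 xpredT g isT.
have [r eq_r max_r] := @arg_maxnP _ i0 (fun i => g i == g i0) val (eqxx _).
exists r => // i ik.
have min_r : f r <= f i by rewrite -/(g r) (eqP eq_r); apply: (min_i0 (Ordinal ik)).
split=> // ri; rewrite lt_neqAle min_r andbT; apply: contraTneq ri => fri.
by rewrite -leqNgt; apply: (max_r (Ordinal ik)); rewrite /g /= -fri.
Qed.

Lemma cycle_lemma b : (0 < size b)%N -> 0 < \sum_(x <- b) x ->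
  exists2 r, (r < size b)%N & prefix_sums_pos (rot r b).
Proof.
move=> b0 Spos; have [r rb minr] := exists_last_argmin (prefix_sum b) b0.
have Pr_le0 : prefix_sum b r <= 0.
  by have [+ _] := minr 0%N b0; rewrite /prefix_sum take0 big_nil.
exists r => //; apply/allP => i; rewrite size_rot mem_iota add0n => /andP[_ ib].
rewrite prefix_sum_rot ?(ltnW rb) //; case: ifP => ir.
  have [->|ne] := eqVneq (r + i.+1)%N (size b).
    by rewrite {1}/prefix_sum take_size; lra.
  by rewrite subr_gt0; apply: (minr _ _).2; lia.
have lt_i' : (i.+1 - (size b - r) < size b)%N by lia.
by have [+ _] := minr _ lt_i'; lra.
Qed.

Lemma prefix_sums_pos_take b i : prefix_sums_pos b -> (0 < i <= size b)%N ->
  0 < \sum_(x <- take i b) x.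
Proof.
move=> /allP pos /andP[i0 ib]; rewrite -(prednK i0).
by apply: pos; rewrite mem_iota add0n prednK.
Qed.

End PrefixSums.

Section SubsetSums.
Variables (R : realFieldType) (n : nat) (lam : 'I_n -> R).
Implicit Types (J : {set 'I_n}) (s t : seq {set 'I_n}).
Local Notation S := (\sum_(i < n) lam i).

Definition mean J := sJ lam J / #|J|%:R.

Lemma sJ_set0 : sJ lam set0 = 0.
Proof. by rewrite /sJ big_pred0 // => x; rewrite inE. Qed.

Lemma sJ_setT : sJ lam setT = S.
Proof. by rewrite /sJ; apply: eq_bigl => x; rewrite inE. Qed.

Lemma sJ_setC J : sJ lam J + sJ lam (~: J) = S.
Proof.
rewrite /sJ [RHS](bigID (mem J)) /=; congr (_ + _).
by apply: eq_bigl => x; rewrite inE.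
Qed.

Lemma sum_sJ t :
  \sum_(B <- t) sJ lam B = \sum_x (count (fun B : {set 'I_n} => x \in B) t)%:R * lam x.
Proof.
elim: t => [|B t IHt]; first by rewrite big_nil big1 // => x _; rewrite mul0r.
rewrite big_cons IHt /sJ big_mkcond -big_split; apply: eq_bigr => x _ /=.
by rewrite natrD mulrDl; case: (x \in B); rewrite ?mul1r ?mul0r.
Qed.

Lemma sum_sJ_part s : is_part s -> \sum_(B <- s) sJ lam B = S.
Proof.
case/andP => _ /forallP one; rewrite sum_sJ; apply: eq_bigr => x _.
by rewrite (eqP (one x)) mul1r.
Qed.

Lemma sum_sJ_disjoint t : (forall x, count (fun B : {set 'I_n} => x \in B) t <= 1)%N ->
  \sum_(B <- t) sJ lam B = sJ lam [set x | count (fun B : {set 'I_n} => x \in B) t == 1%N].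
Proof.
move=> le1; rewrite sum_sJ /sJ [RHS]big_mkcond; apply: eq_bigr => x _.
by rewrite inE; move: (le1 x); case: count => [|[|]] //= _; rewrite ?mul0r ?mul1r.
Qed.

Lemma delta_le_mean J : 0 < sJ lam J -> delta lam <= mean J.
Proof. exact: bigmin_le_cond. Qed.

Lemma delta_attained : 0 < S -> exists2 J, 0 < sJ lam J & delta lam = mean J.
Proof.
move=> Spos; have posT : 0 < sJ lam setT by rewrite sJ_setT.
have [J posJ minJ] := @arg_minP _ _ _ setT (fun J => 0 < sJ lam J) mean posT.
exists J => //; apply/le_anti; rewrite delta_le_mean //=.
by apply: le_bigmin => [|K /minJ //]; apply: minJ.
Qed.

Lemma Nlam_le_card J : J != set0 -> mean J = delta lam -> (Nlam lam <= #|J|)%N.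
Proof.
move=> J0 rJ; rewrite /Nlam -leEnat -minEnat.
by apply: bigmin_le_cond; rewrite J0 -/(mean J) rJ eqxx.
Qed.

Lemma Nlam_full_delta : 0 < S -> Nlam lam = n -> delta lam = S / n%:R.
Proof.
move=> Spos Nn; have [J posJ dJ] := delta_attained Spos.
suff JT : J = setT by rewrite dJ JT /mean sJ_setT cardsT card_ord.
apply/eqP; rewrite eqEcard subsetT cardsT card_ord -[X in (X <= _)%N]Nn.
apply: Nlam_le_card (esym dJ).
by apply: contraTneq posJ => ->; rewrite sJ_set0 ltxx.
Qed.

Lemma card_gt0_sJ J : 0 < sJ lam J -> (0 < #|J|)%N.
Proof. by rewrite card_gt0; apply: contraTneq => ->; rewrite sJ_set0 ltxx. Qed.

Lemma Nlam_full_mean_gt J : 0 < S -> Nlam lam = n ->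
  0 < sJ lam J -> J != setT -> S / n%:R < mean J.
Proof.
move=> Spos Nn posJ JT.
rewrite -(Nlam_full_delta Spos Nn) lt_neqAle delta_le_mean // andbT.
apply: contra JT => /eqP dJ; rewrite eqEcard subsetT cardsT card_ord -[X in (X <= _)%N]Nn.
by apply: Nlam_le_card (esym dJ); rewrite -card_gt0 card_gt0_sJ.
Qed.

Lemma Nlam_full_generic J : 0 < S -> Nlam lam = n -> ~~ (0 < sJ lam J < S).
Proof.
move=> Spos Nn; apply/negP => /andP[posJ ltJ].
have sJC := sJ_setC J.
have posC : 0 < sJ lam (~: J) by lra.
have JT : J != setT by apply: contraTneq ltJ => ->; rewrite sJ_setT ltxx.
have JCT : ~: J != setT.
  by apply: contraTneq posJ => JC; rewrite -[J]setCK JC setCT sJ_set0 ltxx.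
have := Nlam_full_mean_gt Spos Nn posJ JT.
have := Nlam_full_mean_gt Spos Nn posC JCT.
rewrite /mean !ltr_pdivlMr ?ltr0n ?card_gt0_sJ //.
have n0 : n%:R != 0 :> R.
  by rewrite pnatr_eq0 -lt0n -(card_ord n) -(cardsC J) ltn_addr ?card_gt0_sJ.
have : S / n%:R * #|J|%:R + S / n%:R * #|~: J|%:R = S.
  by rewrite -mulrDr -natrD cardsC card_ord divfK.
lra.
Qed.

End SubsetSums.

Definition prefix_pos (R : realFieldType) n (lam : 'I_n -> R) (s : seq {set 'I_n}) :=
  prefix_sums_pos (map (sJ lam) s).

Definition in_P0ord_seq (R : realFieldType) n (lam : 'I_n -> R) (s : seq {set 'I_n}) :=
  [&& is_part s, prefix_pos lam s & at_most_one_odd s].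

Lemma in_P0ordE (R : realFieldType) n (lam : 'I_n -> R) k (P : k.-tuple {set 'I_n}) :
  in_P0ord lam P = in_P0ord_seq lam P.
Proof. by rewrite /in_P0ord /in_Pord is_ord_partitionE prefix_sums_posE -andbA. Qed.

Definition weight (R : pzRingType) n (s : seq {set 'I_n}) : R :=
  (-1) ^+ size s * word_sign R (block_seq s) *
  (-1) ^+ (\sum_(B <- s) #|B| * (#|B| - 1))./2.

Lemma weight_tuple (R : realFieldType) n k (P : k.-tuple {set 'I_n}) :
  (-1) ^+ k * eps R P * eps' R P = weight R P.
Proof. by rewrite /weight size_tuple. Qed.

Lemma head_rot (T : Type) (x0 : T) (s : seq T) i : (i < size s)%N ->
  head x0 (rot i s) = nth x0 s i.
Proof. by move=> si; rewrite /rot -nth0 nth_cat size_drop subn_gt0 si nth_drop addn0. Qed.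

Section Rotations.
Variable m : nat.
Local Notation n := m.+1.
Implicit Types (s t u : seq {set 'I_n}).

Lemma is_part_rot j s : is_part (rot j s) = is_part s.
Proof.
have rs := permEl (perm_rot j s).
rewrite /is_part (perm_mem rs); congr (_ && _).
by apply: eq_forallb => x; rewrite (seq.permP rs).
Qed.

Lemma at_most_one_odd_rot j s : at_most_one_odd (rot j s) = at_most_one_odd s.
Proof. by rewrite /at_most_one_odd (seq.permP (permEl (perm_rot j s))). Qed.

Lemma weight_rot (R : pzRingType) j s : is_part s -> at_most_one_odd s ->
  weight R (rot j s) = weight R s.
Proof.
move=> ps odd1; have [js|js] := leqP (size s) j; first by rewrite rot_oversize.
have rs := permEl (perm_rot j s).
have size_split : (size (block_seq (take j s)) + size (block_seq (drop j s)))%N = n.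
  by rewrite -size_cat -block_seq_cat cat_take_drop size_block_seq_part.
rewrite /weight size_rot (perm_big _ rs); congr (_ * _ * _).
have -> : block_seq (rot j s) = rot (size (block_seq (take j s))) (block_seq s).
  by rewrite {1}/rot -[in block_seq s](cat_take_drop j s) !block_seq_cat rot_size_cat.
rewrite word_sign_rot ?part_perm_enum //; last first.
  by rewrite -[X in (_ <= X)%N]size_split leq_addr.
(* If n is even, no block is odd, so the rotation amount is even. *)
suff -> : odd (size (block_seq (take j s))) && ~~ odd n = false by rewrite mul1r.
rewrite -[X in ~~ odd X]size_split oddD !odd_size_block_seq.
move: odd1; rewrite /at_most_one_odd -{1}(cat_take_drop j s) count_cat.
by case: count => [|[|]] //; case: count => [|[|]].
Qed.

Variables (R : realFieldType) (lam : 'I_n -> R) (x0 : 'I_n).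
Hypothesis Spos : 0 < \sum_i lam i.
Hypothesis generic : forall J, ~~ (0 < sJ lam J < \sum_i lam i).

Lemma part_prefix_sJ_ge t u : is_part (t ++ u) ->
  0 < \sum_(B <- t) sJ lam B -> \sum_i lam i <= \sum_(B <- t) sJ lam B.
Proof.
case/andP => _ /forallP one pos.
have le1 x : (count (fun B : {set 'I_n} => x \in B) t <= 1)%N.
  by have := one x; rewrite count_cat => /eqP <-; apply: leq_addr.
move: pos; rewrite sum_sJ_disjoint // leNgt => pos.
by have := generic [set x | count (fun B : {set 'I_n} => x \in B) t == 1%N]; rewrite pos.
Qed.

Lemma rot_prefix_pos_uniq j s : is_part s -> prefix_pos lam s ->
  prefix_pos lam (rot j s) -> rot j s = s.
Proof.
move=> ps pos_s pos_rot.
have [js|js] := leqP (size s) j; first by rewrite rot_oversize.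
have [->|j0] := posnP j; first by rewrite rot0.
exfalso.
have pos_take : 0 < \sum_(B <- take j s) sJ lam B.
  rewrite -(big_map (sJ lam) xpredT idfun) map_take.
  by apply: prefix_sums_pos_take pos_s _; rewrite j0 size_map ltnW.
have pos_drop : 0 < \sum_(B <- drop j s) sJ lam B.
  have := prefix_sums_pos_take pos_rot (i := size s - j).
  rewrite map_rot /rot take_size_cat ?size_drop ?size_map // -map_drop big_map.
  by apply; rewrite size_cat !size_map size_drop subn_gt0 js leq_addr.
have ps_td : is_part (take j s ++ drop j s) by rewrite cat_take_drop.
have sum_split :
    \sum_(B <- take j s) sJ lam B + \sum_(B <- drop j s) sJ lam B = \sum_i lam i.
  by rewrite -big_cat cat_take_drop sum_sJ_part.
have := part_prefix_sJ_ge ps_td pos_take.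
by rewrite -sum_split gerDl leNgt pos_drop.
Qed.

Lemma rot_head_uniq j s : is_part s -> x0 \in head set0 s ->
  x0 \in head set0 (rot j s) -> rot j s = s.
Proof.
case/andP => _ /forallP/(_ x0)/eqP one x0s.
have [js|js] := leqP (size s) j; first by rewrite rot_oversize.
have [->|j0] := posnP j; first by rewrite rot0.
rewrite head_rot // => x0j; exfalso.
case: s one x0s x0j js => [//|B s] /= one x0B.
rewrite -(prednK j0) /= ltnS => x0j js.
move: one; rewrite x0B add1n => -[/eqP]; rewrite -leqn0 leqNgt -has_count.
by case/negP; apply/hasP; exists (nth set0 s j.-1); rewrite ?mem_nth.
Qed.

Definition rot_to_head s := rot (find (fun B : {set 'I_n} => x0 \in B) s) s.

Definition rot_to_pos s :=
  rot (find (fun r => prefix_pos lam (rot r s)) (iota 0 (size s))) s.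

Lemma head_rot_to_head s : is_part s -> x0 \in head set0 (rot_to_head s).
Proof.
case/andP => _ /forallP/(_ x0)/eqP one.
have hs : has (fun B : {set 'I_n} => x0 \in B) s by rewrite has_count one.
by rewrite /rot_to_head head_rot -?has_find // (nth_find set0 hs).
Qed.

Lemma prefix_pos_rot_to_pos s : is_part s -> prefix_pos lam (rot_to_pos s).
Proof.
move=> ps; have s0 : (0 < size s)%N by case: s ps => // /andP[_ /forallP/(_ x0)].
have [r rs pos_r] : exists2 r, (r < size s)%N & prefix_sums_pos (rot r (map (sJ lam) s)).
  by have := @cycle_lemma _ (map (sJ lam) s); rewrite size_map big_map sum_sJ_part //; apply.
have hs : has (fun r => prefix_pos lam (rot r s)) (iota 0 (size s)).
  by apply/hasP; exists r; rewrite ?mem_iota // /prefix_pos map_rot.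
have := nth_find 0 hs; rewrite nth_iota ?add0n //.
by rewrite -[X in (_ < X)%N](size_iota 0) -has_find.
Qed.

Lemma sum_prefix_pos_eq_sum_head (L : seq (seq {set 'I_n})) :
  uniq L -> (forall s, is_part s -> s \in L) ->
  \sum_(s <- L | in_P0ord_seq lam s) weight R s =
  \sum_(s <- L | [&& is_part s, at_most_one_odd s & x0 \in head set0 s]) weight R s.
Proof.
move=> uL partL.
apply: (@big_filter_bij _ _ _ _ L _ _ _ _ rot_to_head rot_to_pos) => //.
- by move=> s /and3P[ps _ _]; apply: partL.
- by move=> s /and3P[ps _ _]; apply: partL.
- move=> s /and3P[ps pos_s odd1]; have pu : is_part (rot_to_head s) by rewrite is_part_rot.
  split; last exact: weight_rot.
    by rewrite is_part_rot at_most_one_odd_rot ps odd1 head_rot_to_head.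
  move: (prefix_pos_rot_to_pos pu); rewrite /rot_to_pos /rot_to_head rot_rot_add.
  exact: rot_prefix_pos_uniq.
move=> s /and3P[ps odd1 x0s]; have pu : is_part (rot_to_pos s) by rewrite is_part_rot.
split; first by rewrite /in_P0ord_seq is_part_rot at_most_one_odd_rot ps odd1 prefix_pos_rot_to_pos.
move: (head_rot_to_head pu); rewrite /rot_to_pos /rot_to_head rot_rot_add.
exact: rot_head_uniq.
Qed.

End Rotations.

Section BlockSurgery.
Variable n : nat.
Implicit Types (A B : {set 'I_n}) (s pre post : seq {set 'I_n}).
Local Notation ord_lt := (fun x y : 'I_n => (x < y)%N).

Lemma sorted_block B : sorted ord_lt (block B).
Proof.
apply: sorted_filter; first by move=> x y z; apply: ltn_trans.
by have := iota_ltn_sorted 0 n; rewrite -val_enum_ord sorted_map.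
Qed.

Lemma block_eq B (w : seq 'I_n) : sorted ord_lt w -> w =i B -> block B = w.
Proof.
move=> sw wB; apply: (irr_sorted_eq (leT := ord_lt)) => //.
- by move=> x y z; apply: ltn_trans.
- by move=> x; rewrite /= ltnn.
- exact: sorted_block.
by move=> x; rewrite mem_block wB.
Qed.

Lemma block_setU A B : {in A & B, forall x y : 'I_n, (x < y)%N} ->
  block (A :|: B) = block A ++ block B.
Proof.
move=> AltB; apply: block_eq => [|x]; last by rewrite mem_cat !mem_block inE.
rewrite sorted_pairwise; last by move=> x y z; apply: ltn_trans.
rewrite pairwise_cat -!sorted_pairwise ?sorted_block ?andbT //;
  try by move=> x y z; apply: ltn_trans.
by apply/allrelP => x y; rewrite !mem_block; apply: AltB.
Qed.

Lemma block_imset (p : {perm 'I_n}) B : {in B &, {homo p : x y / (x < y)%N}} ->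
  block (p @: B) = map p (block B).
Proof.
move=> p_mono; apply: block_eq => [|x].
  apply: (homo_sorted_in (P := mem B)) p_mono _ (sorted_block B).
  by apply/allP => x; rewrite mem_block.
rewrite -{1}(permKV p x) (mem_map (@perm_inj _ p)) mem_block.
by rewrite -{2}(permKV p x) mem_imset //; apply: perm_inj.
Qed.

Lemma cardsU_disjoint A B : [disjoint A & B] -> #|A :|: B| = (#|A| + #|B|)%N.
Proof. by move=> AB; rewrite -cardsUI (disjoint_setI0 AB) cards0 addn0. Qed.

Lemma is_part_merge pre A B post : A != set0 -> B != set0 -> [disjoint A & B] ->
  is_part (pre ++ A :: B :: post) = is_part (pre ++ (A :|: B) :: post).
Proof.
move=> A0 B0 AB; rewrite /is_part !mem_cat !inE ![set0 == _]eq_sym setU_eq0.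
rewrite (negbTE A0) (negbTE B0) /=; congr (_ && _); apply: eq_forallb => x.
have AB1 : ((x \in A) + (x \in B))%N = (x \in A :|: B).
  by rewrite inE; case: (boolP (x \in A)) => // xA; rewrite (disjointFr AB xA).
by rewrite !count_cat /= -AB1 !addnA.
Qed.

Lemma at_most_one_odd_merge pre A B post : [disjoint A & B] -> ~~ odd #|B| ->
  at_most_one_odd (pre ++ A :: B :: post) = at_most_one_odd (pre ++ (A :|: B) :: post).
Proof.
move=> AB evenB.
by rewrite /at_most_one_odd !count_cat /= cardsU_disjoint // oddD (negbTE evenB) addbF.
Qed.

Lemma is_part_map_imset (p : {perm 'I_n}) s :
  is_part (map (fun B => p @: B) s) = is_part s.
Proof.
have p_inj := @perm_inj _ p.
rewrite /is_part; congr (~~ _ && _).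
  by rewrite -{1}(imset0 p) (mem_map (imset_inj p_inj)).
have count_imset x : count (fun B => x \in B) (map (fun B => p @: B) s) =
                     count (fun B => (p^-1)%g x \in B) s.
  by rewrite count_map; apply: eq_count => B /=; rewrite -{1}(permKV p x) mem_imset.
apply/forallP/forallP => one x; last by rewrite count_imset one.
by have := one (p x); rewrite count_imset permK.
Qed.

Lemma at_most_one_odd_map_imset (p : {perm 'I_n}) s :
  at_most_one_odd (map (fun B => p @: B) s) = at_most_one_odd s.
Proof.
rewrite /at_most_one_odd count_map; congr (_ <= _)%N.
by apply: eq_count => B /=; rewrite card_imset //; apply: perm_inj.
Qed.

Lemma weight_map_tperm (R : pzRingType) (a b : 'I_n) s : a != b -> is_part s ->
    (forall B, B \in s -> {in B &, {homo tperm a b : x y / (x < y)%N}}) ->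
  weight R (map (fun B => tperm a b @: B) s) = - weight R s.
Proof.
move=> ab ps mono; rewrite /weight size_map.
have -> : block_seq (map (fun B => tperm a b @: B) s) = map (tperm a b) (block_seq s).
  elim: s mono {ps} => [//|B s IHs] mono /=.
  rewrite !block_seq_cons map_cat block_imset ?IHs // => [C Cs|]; apply: mono.
    by rewrite inE Cs orbT.
  by rewrite inE eqxx.
rewrite word_sign_tperm ?part_perm_enum // big_map.
have -> : (\sum_(B <- s) #|tperm a b @: B| * (#|tperm a b @: B| - 1) =
           \sum_(B <- s) #|B| * (#|B| - 1))%N.
  by apply: eq_bigr => B _; rewrite card_imset //; apply: perm_inj.
by rewrite mulrN mulNr.
Qed.

Lemma signr_half_addn4 (R : pzRingType) X k :
  (-1) ^+ (X + 4 * k)./2 = (-1) ^+ X./2 :> R.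
Proof.
have -> : (4 * k)%N = (2 * k).*2 by rewrite -mul2n mulnA.
rewrite halfD odd_double andbF add0n doubleK -signr_odd oddD.
by rewrite mul2n odd_double addbF signr_odd.
Qed.

Lemma weight_merge (R : pzRingType) pre A B post :
    {in A & B, forall x y : 'I_n, (x < y)%N} -> ~~ odd #|B| ->
  weight R (pre ++ (A :|: B) :: post) = - weight R (pre ++ A :: B :: post).
Proof.
move=> AltB evenB.
have AB : [disjoint A & B].
  rewrite disjoint_subset; apply/subsetP => x xA; rewrite inE.
  by apply/negP => /(AltB _ _ xA); rewrite ltnn.
have [c Bc] : exists c, #|B| = c.*2.
  by exists #|B|./2; rewrite -[LHS]odd_double_half (negbTE evenB).
rewrite /weight !size_cat !block_seq_cat !block_seq_cons block_setU // -catA.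
rewrite !big_cat !big_cons /= cardsU_disjoint //.
set X := (\sum_(_ <- pre) _)%N; set Y := (\sum_(_ <- post) _)%N.
have -> : (X + ((#|A| + #|B|) * (#|A| + #|B| - 1) + Y) =
           X + (#|A| * (#|A| - 1) + (#|B| * (#|B| - 1) + Y)) + 4 * (#|A| * c))%N.
  by rewrite Bc -mul2n; nia.
by rewrite signr_half_addn4 [in RHS]addnS exprS mulN1r !mulNr opprK.
Qed.

End BlockSurgery.

Section TopPairInvolution.
Variable m : nat.
Local Notation n := m.+3.
Implicit Types (A B : {set 'I_n}) (s pre post : seq {set 'I_n}).

Definition top1 : 'I_n := ord_max.
Definition top2 : 'I_n := Ordinal (leqnSn m.+2).
Definition top_pair : {set 'I_n} := [set top1; top2].
Definition has_top B := (top1 \in B) && (top2 \in B).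
Definition swap_top B := tperm top1 top2 @: B.

Definition top_involution s :=
  if has has_top s then
    if #|nth set0 s (find has_top s)| == 2 then
      take (find has_top s).-1 s ++
        (nth set0 s (find has_top s).-1 :|: top_pair) :: drop (find has_top s).+1 s
    else
      take (find has_top s) s ++
        (nth set0 s (find has_top s) :\: top_pair) :: top_pair :: drop (find has_top s).+1 s
  else map swap_top s.

Lemma top1_neq_top2 : top1 != top2.
Proof. by rewrite -val_eqE /= eqn_leq ltnn. Qed.

Lemma card_top_pair : #|top_pair| = 2.
Proof. by rewrite cards2 top1_neq_top2. Qed.

Lemma ord0_notin_top_pair : ord0 \notin top_pair.
Proof. by rewrite !inE -!val_eqE. Qed.

Lemma has_top_pair : has_top top_pair.
Proof. by rewrite /has_top !inE !eqxx orbT. Qed.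

Lemma lt_top_pair A : top1 \notin A -> top2 \notin A ->
  {in A & top_pair, forall x y : 'I_n, (x < y)%N}.
Proof.
move=> t1A t2A x y xA; have := ltn_ord x.
have : x != top1 by apply: contraNneq t1A => <-.
have : x != top2 by apply: contraNneq t2A => <-.
by rewrite !inE -!val_eqE /= => x2 x1 xn /orP[] /eqP ->; lia.
Qed.

Lemma tperm_top_homo B : ~~ has_top B ->
  {in B &, {homo tperm top1 top2 : x y / (x < y)%N}}.
Proof.
move=> nB x y xB yB xy.
have fixed (z : 'I_n) : (z < m.+1)%N -> tperm top1 top2 z = z.
  by move=> zm; rewrite tpermD // -val_eqE /=; lia.
have [ym|my] := ltnP y m.+1; first by rewrite !fixed // (ltn_trans xy).
have [ey|ey] : y = top2 \/ y = top1.
  have := ltn_ord y; case: ((y : nat) =P m.+1) => e yn; [left|right].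
    by apply: val_inj.
  by apply: val_inj => /=; lia.
  by rewrite ey in xy *; rewrite tpermR fixed //; apply: ltnW.
have xm : (x < m.+1)%N.
  have : x != top2 by apply: contraNneq nB => ex; rewrite /has_top -ex -ey xB yB.
  by move: xy; rewrite ey -val_eqE /=; lia.
by rewrite ey tpermL fixed.
Qed.

Lemma disjoint_top_pair A : top1 \notin A -> top2 \notin A -> [disjoint A & top_pair].
Proof.
by move=> t1A t2A; rewrite disjoint_sym disjoints_subset subUset !sub1set !inE t1A t2A.
Qed.

Lemma mem_swap_top x B : (x \in swap_top B) = (tperm top1 top2 x \in B).
Proof. by rewrite -{1}(tpermK top1 top2 x) mem_imset //; apply: perm_inj. Qed.

Lemma has_top_swap B : has_top (swap_top B) = has_top B.
Proof. by rewrite /has_top !mem_swap_top tpermL tpermR andbC. Qed.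

Lemma swap_topK : involutive swap_top.
Proof. by move=> B; apply/setP => x; rewrite !mem_swap_top tpermK. Qed.

Lemma involution_swap s : ~~ has has_top s -> top_involution (map swap_top s) = s.
Proof.
move=> nhs; rewrite /top_involution has_map (eq_has has_top_swap) (negbTE nhs).
by rewrite -map_comp (eq_map swap_topK) map_id.
Qed.

Lemma involution_merge pre A post : ~~ has has_top pre ->
    top1 \notin A -> top2 \notin A ->
  top_involution (pre ++ A :: top_pair :: post) = pre ++ (A :|: top_pair) :: post.
Proof.
move=> npre t1A _.
have nA : ~~ has_top A by rewrite /has_top (negbTE t1A).
rewrite /top_involution has_cat /= has_top_pair orbT.
rewrite find_cat (negbTE npre) /= (negbTE nA) has_top_pair addn1 /=.
rewrite nth_cat ltnNge leqnSn subSnn /= card_top_pair eqxx.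
rewrite nth_cat ltnn subnn /= take_size_cat //.
by rewrite -[A :: _]/([:: A; top_pair] ++ post) catA drop_size_cat // size_cat addn2.
Qed.

Lemma involution_split pre A post : ~~ has has_top pre -> A != set0 ->
    top1 \notin A -> top2 \notin A ->
  top_involution (pre ++ (A :|: top_pair) :: post) = pre ++ A :: top_pair :: post.
Proof.
move=> npre A0 t1A t2A; have AD := disjoint_top_pair t1A t2A.
have hU : has_top (A :|: top_pair) by rewrite /has_top !inE !eqxx !orbT.
rewrite /top_involution has_cat /= hU orbT find_cat (negbTE npre) /= hU addn0.
rewrite nth_cat ltnn subnn /=.
have -> : #|A :|: top_pair| == 2 = false.
  by rewrite cardsU_disjoint // card_top_pair addn2 eqSS; apply/negbTE; rewrite -lt0n card_gt0.
rewrite take_size_cat // setDUl setDv setU0 (setDidPl AD).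
by rewrite -[_ :: post]/([:: A :|: top_pair] ++ post) catA drop_size_cat // size_cat addn1.
Qed.

Definition admissible s := [&& is_part s, at_most_one_odd s & ord0 \in head set0 s].

Lemma admissible_merge pre A post : A != set0 -> top1 \notin A -> top2 \notin A ->
  admissible (pre ++ A :: top_pair :: post) = admissible (pre ++ (A :|: top_pair) :: post).
Proof.
move=> A0 t1A t2A; have AD := disjoint_top_pair t1A t2A.
have D0 : top_pair != set0 by apply/set0Pn; exists top1; rewrite !inE eqxx.
rewrite /admissible is_part_merge ?at_most_one_odd_merge ?card_top_pair //.
by case: pre => //=; rewrite in_setU (negbTE ord0_notin_top_pair) orbF.
Qed.

Lemma admissible_swap s : admissible s -> admissible (map swap_top s).
Proof.
case/and3P => ps odd1 x0s; rewrite /admissible is_part_map_imset at_most_one_odd_map_imset.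
rewrite ps odd1; case: s x0s {ps odd1} => //= B s; rewrite mem_swap_top tpermD //;
  by apply: contraNneq ord0_notin_top_pair => <-; rewrite !inE eqxx ?orbT.
Qed.

Lemma setDU_top_pair B : top_pair \subset B -> (B :\: top_pair) :|: top_pair = B.
Proof.
move=> DB; apply/setP => x; rewrite in_setU in_setD.
case xD: (x \in top_pair); last by rewrite orbF.
by rewrite orbT (subsetP DB _ xD).
Qed.

Lemma top_shape s : admissible s -> has has_top s ->
  exists pre A post, [/\ ~~ has has_top pre, A != set0, top1 \notin A, top2 \notin A &
    s = pre ++ A :: top_pair :: post \/ s = pre ++ (A :|: top_pair) :: post].
Proof.
case/and3P => ps _ x0s hs; set i := find has_top s.
have lt_i : (i < size s)%N by rewrite -has_find.
have /andP[t1B t2B] : has_top (nth set0 s i) by apply: nth_find.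
have npre j : (j <= i)%N -> ~~ has has_top (take j s).
  by move=> ji; rewrite has_take_leq -?leqNgt // (leq_trans ji (ltnW lt_i)).
have DB : top_pair \subset nth set0 s i by rewrite subUset !sub1set t1B t2B.
have [c2|c2] := eqVneq #|nth set0 s i| 2.
  have eB : nth set0 s i = top_pair.
    by apply/eqP; rewrite eq_sym eqEcard DB card_top_pair c2.
  have [i' ei] : exists i', i = i'.+1.
    exists i.-1; rewrite prednK // lt0n; apply: contraNneq ord0_notin_top_pair => i0.
    by rewrite -eB i0 nth0.
  have es : s = take i' s ++ nth set0 s i' :: top_pair :: drop i.+1 s.
    by rewrite -eB ei -!drop_nth ?cat_take_drop // -ei // ltnW.
  have AD : [disjoint nth set0 s i' & top_pair].
    by move: ps; rewrite {1}es => /is_part_disjoint.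
  exists (take i' s), (nth set0 s i'), (drop i.+1 s); split; last by left.
  - by apply: npre; rewrite ei.
  - by apply: is_part_neq0 ps _; rewrite mem_nth // ltnW // -ei.
  - by rewrite (disjointFl AD) // !inE eqxx.
  - by rewrite (disjointFl AD) // !inE eqxx orbT.
exists (take i s), (nth set0 s i :\: top_pair), (drop i.+1 s); split => //.
- exact: npre.
- rewrite -card_gt0 cardsD (setIidPr DB) card_top_pair subn_gt0.
  by rewrite ltn_neqAle eq_sym c2 -card_top_pair subset_leq_card.
- by rewrite !inE eqxx.
- by rewrite !inE eqxx orbT.
by right; rewrite setDU_top_pair // -drop_nth ?cat_take_drop.
Qed.

Lemma top_involution_sign (R : pzRingType) s : admissible s ->
  [/\ admissible (top_involution s), top_involution (top_involution s) = s &
      weight R (top_involution s) = - weight R s].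
Proof.
move=> adm; have [hs|nhs] := boolP (has has_top s); last first.
  have -> : top_involution s = map swap_top s by rewrite /top_involution (negbTE nhs).
  rewrite involution_swap // admissible_swap //.
  split=> //; apply: weight_map_tperm top1_neq_top2 _ _; first by case/and3P: adm.
  by move=> B Bs; apply: tperm_top_homo; apply: (hasPn nhs).
have [pre [A [post [npre A0 t1A t2A [es|es]]]]] := top_shape adm hs; subst s.
  rewrite involution_merge // involution_split //; split => //.
    by rewrite -admissible_merge.
  by rewrite weight_merge ?card_top_pair //; apply: lt_top_pair.
rewrite involution_split // involution_merge //; split => //.
  by rewrite admissible_merge.
by rewrite weight_merge ?card_top_pair ?opprK //; apply: lt_top_pair.
Qed.

Lemma sum_admissible_weight_eq0 (R : numDomainType) (L : seq (seq {set 'I_n})) :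
  uniq L -> (forall s, is_part s -> s \in L) ->
  \sum_(s <- L | admissible s) weight R s = 0.
Proof.
move=> uL partL; apply: (@sum_sign_reversing_involution _ _ L _ _ top_involution) => //.
  by move=> s /and3P[ps _ _]; apply: partL.
by move=> s /(top_involution_sign R).
Qed.

End TopPairInvolution.

Section BoundedSeqs.
Variable T : finType.

Definition seqs_of_size k : seq (seq T) := map val (enum {: k.-tuple T}).

Definition seqs_below N : seq (seq T) := flatten [seq seqs_of_size k | k <- iota 0 N].

Lemma mem_seqs_of_size k s : (s \in seqs_of_size k) = (size s == k).
Proof.
apply/mapP/eqP => [[P _ ->]|sk]; first exact: size_tuple.
by exists (Tuple (introT eqP sk)); rewrite ?mem_enum.
Qed.

Lemma uniq_seqs_of_size k : uniq (seqs_of_size k).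
Proof. by rewrite map_inj_uniq ?enum_uniq //; apply: val_inj. Qed.

Lemma mem_seqs_below N s : (s \in seqs_below N) = (size s < N)%N.
Proof.
apply/flatten_mapP/idP => [[k]|sN].
  by rewrite mem_iota mem_seqs_of_size => kN /eqP ->.
by exists (size s); rewrite ?mem_iota ?mem_seqs_of_size.
Qed.

Lemma uniq_seqs_below N : uniq (seqs_below N).
Proof.
rewrite /seqs_below; elim: {N}(iota 0 N) (iota_uniq 0 N) => [//|k ks IHks] /= /andP[kks uks].
rewrite cat_uniq uniq_seqs_of_size IHks // andbT; apply/hasP => -[s /flatten_mapP[k' k'ks]].
by rewrite !mem_seqs_of_size => /eqP-> /eqP kk'; rewrite -kk' k'ks in kks.
Qed.

Lemma sum_tuples (R : nmodType) N (A : pred (seq T)) (F : seq T -> R) :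
  \sum_(k < N) \sum_(P : k.-tuple T | A P) F P = \sum_(s <- seqs_below N | A s) F s.
Proof.
rewrite /seqs_below; have -> : iota 0 N = index_iota 0 N by rewrite /index_iota subn0.
rewrite big_flatten big_map /= big_mkord.
by apply: eq_bigr => k _; rewrite big_map big_enum_cond.
Qed.

End BoundedSeqs.

Theorem mainTheorem9 (R : realFieldType) (n : nat) (lam : 'I_n -> R) :
  (3 <= n)%N ->
  0 < \sum_(i < n) lam i ->
  Nlam lam = n ->
  \sum_(k < n.+1) \sum_(P : k.-tuple {set 'I_n} | in_P0ord lam P)
     ((-1) ^+ k * eps R P * eps' R P) = 0 :> R.
Proof.
move=> n3 Spos Nn.
have generic J := Nlam_full_generic J Spos Nn.
have summand k :
    \sum_(P : k.-tuple {set 'I_n} | in_P0ord lam P) ((-1) ^+ k * eps R P * eps' R P) =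
    \sum_(P : k.-tuple {set 'I_n} | in_P0ord_seq lam P) weight R P.
  by apply: eq_big => [P|P _]; [apply: in_P0ordE | apply: weight_tuple].
under eq_bigr => k _ do rewrite summand.
rewrite sum_tuples.
case: n lam n3 Spos {Nn summand} generic => [|[|[|m]]] // lam _ Spos generic.
have partL (s : seq {set 'I_m.+3}) : is_part s -> s \in seqs_below _ m.+4.
  by move=> ps; rewrite mem_seqs_below ltnS size_part.
rewrite (sum_prefix_pos_eq_sum_head ord0 Spos generic (uniq_seqs_below _ _) partL).
exact: sum_admissible_weight_eq0 (uniq_seqs_below _ _) partL.
Qed.
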